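(* Let $H(d,q)$ be the Hamming graph, with intersection numbers $c_i=i$ and $b_i=(d-i)(q-1)$ for $i=0,1,\ldots,d$. Let $A$ and $D$ be its adjacency matrix and distance matrix (same vertex ordering), and let $t=dq^{d-1}(q-1)$. Define $$p(x)=t\left\{ \prod_{i=1}^d\frac{x-b_{0}+qc_{i}}{qc_{i}}- \frac{1}{d(q-1)} \prod_{\substack{i=0\\ i\neq1}}^d \frac{x-b_{0}+qc_{i}}{q(c_{i}-1)}\right\}.$$ Then $D=p(A)$.
   Context: The Hamming graph $H(d,q)$ (with $d\ge 1$, $q\ge 2$) has as vertices all ordered $d$-tuples over a $q$-element set, two vertices being adjacent if and only if they differ in exactly one coordinate. The distance matrix of a connected graph has $(u,v)$ entry equal to the length of a shortest $u$–$v$ path. The intersection numbers of a distance regular graph: for vertices $x,y$ at distance $i$, $c_i$ (resp. $b_i$) is the number of neighbours of $y$ at distance $i-1$ (resp. $i+1$) from $x$. *)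

From HB Require Import structures.
From mathcomp Require Import all_boot all_order all_algebra.
Set Implicit Arguments. Unset Strict Implicit. Unset Printing Implicit Defensive.
Import Order.TTheory GRing.Theory Num.Theory.
Local Open Scope ring_scope.

Definition hvertex (d q : nat) := {ffun 'I_d -> 'I_q}.

Definition hadj (d q : nat) : rel (hvertex d q) :=
  fun u v => #|[set i | u i != v i]| == 1%N.

Definition walkb (T : finType) (e : rel T) (n : nat) (x y : T) : bool :=
  [exists s : n.-tuple T, path e x s && (last x s == y)].

(* Graph distance: the length of a shortest x-y walk (a shortest walk, if any,
   has length < #|T|); for disconnected pairs this returns #|T| (irrelevant for
   connected graphs). *)
Definition gdist (T : finType) (e : rel T) (x y : T) : nat :=
  find (fun n => walkb e n x y) (iota 0 #|T|).

Definition adj_mx (R : pzRingType) (T : finType) (e : rel T) : 'M[R]_#|T| :=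
  \matrix_(i, j) (e (enum_val i) (enum_val j))%:R.

Definition dist_mx (R : pzRingType) (T : finType) (e : rel T) : 'M[R]_#|T| :=
  \matrix_(i, j) (gdist e (enum_val i) (enum_val j))%:R.

Definition mx_eval (R : comNzRingType) (n : nat) (p : {poly R}) (A : 'M[R]_n) : 'M[R]_n :=
  \sum_(k < size p) p`_k *: A ^+ k.

Definition hc (i : nat) : nat := i.
Definition hb (d q i : nat) : nat := ((d - i) * (q - 1))%N.

Definition hpoly (R : fieldType) (d q : nat) : {poly R} :=
  let t : R := (d * q ^ d.-1 * (q - 1))%N%:R in
  let lin (i : nat) : {poly R} := 'X - ((hb d q 0)%:R)%:P + ((q * hc i)%N%:R)%:P in
  t%:P *
  (\prod_(1 <= i < d.+1) (lin i * (((q * hc i)%N%:R)^-1)%:P)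
   - (((d * (q - 1))%N%:R)^-1)%:P *
     \prod_(0 <= i < d.+1 | i != 1%N)
        (lin i * ((q%:R * ((hc i)%:R - 1))^-1)%:P)).

(* For S a set of coordinates, let E_S be the tensor product over the coordinates c of
   I - J/q when c is in S and J/q otherwise.  The E_S sum to the identity.  A is the sum
   over c of J - I in coordinate c and I elsewhere, and J - I acts as q-1 on J/q and as
   -1 on I - J/q, so A E_S = θ_|S| E_S with θ_n = d(q-1) - qn; hence
   p(A) = Σ_S p(θ_|S|) E_S.  The graph distance is the Hamming distance, the sum over c
   of J - I in coordinate c and J elsewhere; as J = q (J/q) and
   J - I = (q-1) J/q - (I - J/q), this is D = q^(d-1) (d(q-1) E_∅ - Σ_c E_{c}).  At θ_n
   the factors of the two products in p become (i-n)/i and (i-n)/(i-1), so p(θ_n) is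
   exactly the coefficient of E_S in D: q^(d-1) d(q-1) for n = 0, -q^(d-1) for n = 1,
   and 0 for n >= 2. *)

From HB Require Import structures.
From mathcomp Require Import all_boot all_order all_algebra ring.
Import GRing.Theory Num.Theory.
Set Implicit Arguments. Unset Strict Implicit. Unset Printing Implicit Defensive.
Local Open Scope ring_scope.

Section KernelMatrix.
Variables (R : pzRingType) (T : finType).

Definition kernel_mx (f : T -> T -> R) : 'M[R]_#|T| :=
  \matrix_(i, j) f (enum_val i) (enum_val j).

Lemma eq_kernel_mx (f g : T -> T -> R) : f =2 g -> kernel_mx f = kernel_mx g.
Proof. by move=> fg; apply/matrixP => i j; rewrite !mxE fg. Qed.

Lemma kernel_mxM (f g : T -> T -> R) :
  kernel_mx f *m kernel_mx g = kernel_mx (fun u v => \sum_w f u w * g w v).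
Proof.
apply/matrixP => i j; rewrite !mxE (reindex _ (onW_bij _ (@enum_val_bij T))) /=.
by apply: eq_bigr => k _; rewrite !mxE.
Qed.

Lemma kernel_mx_sum (I : finType) (f : I -> T -> T -> R) :
  kernel_mx (fun u v => \sum_i f i u v) = \sum_i kernel_mx (f i).
Proof. by apply/matrixP => i j; rewrite mxE summxE; apply: eq_bigr => k _; rewrite !mxE. Qed.

Lemma kernel_mx_scale (a : R) (f : T -> T -> R) :
  kernel_mx (fun u v => a * f u v) = a *: kernel_mx f.
Proof. by apply/matrixP => i j; rewrite !mxE. Qed.

Lemma kernel_mx1 : kernel_mx (fun u v => (u == v)%:R) = 1%:M.
Proof. by apply/matrixP => i j; rewrite !mxE (inj_eq enum_val_inj). Qed.

End KernelMatrix.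

Section PolyEvalSpectral.
Variables (R : comNzRingType) (n : nat).

Lemma mx_eval_eigen (p : {poly R}) (A X : 'M[R]_n) (t : R) :
  A *m X = t *: X -> mx_eval p A *m X = p.[t] *: X.
Proof.
move=> AX; have AkX k : A ^+ k *m X = t ^+ k *: X.
  elim: k => [|k IHk]; first by rewrite !expr0 mul1mx scale1r.
  by rewrite exprSr -[_ * _]/(_ *m _) -mulmxA AX -scalemxAr IHk scalerA -exprS.
rewrite /mx_eval mulmx_suml horner_coef scaler_suml.
by apply: eq_bigr => k _; rewrite -scalemxAl AkX scalerA.
Qed.

Lemma mx_eval_spectral (I : finType) (X : I -> 'M[R]_n) (t : I -> R) (p : {poly R}) (A : 'M[R]_n) :
  \sum_i X i = 1%:M -> (forall i, A *m X i = t i *: X i) ->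
  mx_eval p A = \sum_i p.[t i] *: X i.
Proof.
move=> sumX AX; rewrite -[LHS]mulmx1 -sumX mulmx_sumr.
by apply: eq_bigr => i _; apply: mx_eval_eigen.
Qed.

End PolyEvalSpectral.

Lemma prodr_nat_bool (R : comPzSemiRingType) (I : finType) (P : pred I) :
  \prod_i (P i)%:R = [forall i, P i]%:R :> R.
Proof.
have [allP | /forallPn [i notPi]] := boolP [forall i, P i].
  by rewrite big1 // => i _; rewrite (forallP allP).
by rewrite (bigD1 i) //= (negbTE notPi) mul0r.
Qed.

Lemma sum_neq_mulr (R : pzRingType) (A : finType) (a : A) (f : A -> R) :
  \sum_x (a != x)%:R * f x = \sum_x f x - f a.
Proof.
rewrite (bigD1 a) //= [X in _ = X - _](bigD1 a) //= eqxx mul0r add0r addrAC subrr add0r.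
by apply: eq_bigr => x; rewrite eq_sym => /negbTE->; rewrite mul1r.
Qed.

Lemma sum_eq_mulr (R : pzSemiRingType) (A : finType) (a : A) (f : A -> R) :
  \sum_x (a == x)%:R * f x = f a.
Proof.
rewrite (bigD1 a) //= eqxx mul1r big1 ?addr0 // => x.
by rewrite eq_sym => /negbTE->; rewrite mul0r.
Qed.

Lemma natr_card_set (R : pzSemiRingType) (I : finType) (A : {set I}) :
  #|A|%:R = \sum_i (i \in A)%:R :> R.
Proof.
by rewrite -sum1_card natr_sum big_mkcond; apply: eq_bigr => i _; case: (i \in A).
Qed.

Lemma sum_card_le1 (V : nmodType) (I : finType) (f : {set I} -> V) :
  (forall S : {set I}, (1 < #|S|)%N -> f S = 0) -> \sum_S f S = f set0 + \sum_i f [set i].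
Proof.
move=> f_gt1; rewrite (bigID (fun S : {set I} => #|S| == 1%N)) /= big_cards1 addrC; congr (_ + _).
rewrite (bigD1 set0) ?cards0 //= big1 ?addr0 // => S /andP [/negbTE S1 S0].
by apply: f_gt1; rewrite ltn_neqAle eq_sym S1 card_gt0 S0.
Qed.

Lemma prod_index_iota_eq0 (R : idomainType) (a b n : nat) (P : pred nat) (F : nat -> R) :
  (a <= n < b)%N -> P n -> F n = 0 -> \prod_(a <= i < b | P i) F i = 0.
Proof.
move=> n_in Pn Fn0; apply/eqP; rewrite prodf_seq_eq0; apply/hasP.
by exists n; rewrite ?mem_index_iota // Pn Fn0 eqxx.
Qed.

Section ProductKernel.
Variables (R : comPzSemiRingType) (I A : finType).

Definition prod_kernel (F : I -> A -> A -> R) (u v : {ffun I -> A}) : R :=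
  \prod_i F i (u i) (v i).

Lemma prod_kernel_conv (F G : I -> A -> A -> R) (u v : {ffun I -> A}) :
  \sum_w prod_kernel F u w * prod_kernel G w v =
  prod_kernel (fun i a b => \sum_x F i a x * G i x b) u v.
Proof.
rewrite /prod_kernel (bigA_distr_bigA (fun i x => F i (u i) x * G i x (v i))) /=.
by apply: eq_bigr => w _; rewrite -big_split.
Qed.

End ProductKernel.

Lemma gdist_shortest (T : finType) (e : rel T) (x y : T) (n : nat) :
  (n < #|T|)%N -> walkb e n x y -> (forall m, walkb e m x y -> n <= m)%N ->
  gdist e x y = n.
Proof.
move=> n_lt walk_n shortest; rewrite /gdist -(subnKC (ltnW n_lt)) iotaD find_cat.
have -> : has (fun m => walkb e m x y) (iota 0 n) = false.
  apply/hasPn => m; rewrite mem_iota add0n => /andP [_ m_lt].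
  by apply: contraTN m_lt => /shortest; rewrite -leqNgt.
rewrite size_iota add0n; case: (#|T| - n)%N (subn_gt0 n #|T|) => [|k _]; first by rewrite n_lt.
by rewrite /= walk_n addn0.
Qed.

Definition hdist d q (u v : hvertex d q) : nat := #|[set i | u i != v i]|.

Section HammingDistance.
Variables d q : nat.
Implicit Types u v w : hvertex d q.

Lemma hdist_triangle u w v : (hdist u v <= hdist u w + hdist w v)%N.
Proof.
apply: leq_trans (leq_card_setU _ _); apply: subset_leq_card; apply/subsetP => i.
by rewrite !inE; case: (u i =P w i) => [->|].
Qed.

Lemma hdist0 u v : (hdist u v == 0)%N = (u == v).
Proof.
rewrite cards_eq0; apply/eqP/eqP => [uv | ->]; last by apply/setP => i; rewrite !inE eqxx.
by apply/ffunP => i; move/setP/(_ i): uv; rewrite !inE => /negbFE/eqP.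
Qed.

Lemma hdist_path_le u (s : seq (hvertex d q)) :
  path (@hadj d q) u s -> (hdist u (last u s) <= size s)%N.
Proof.
elim: s u => [|w s IHs] u /=; first by rewrite leqn0 hdist0.
case/andP=> /eqP uw /IHs ws; apply: leq_trans (hdist_triangle u w _) _.
by rewrite [hdist u w]uw.
Qed.

Lemma walkb_hdist_le n u v : walkb (@hadj d q) n u v -> (hdist u v <= n)%N.
Proof.
case/existsP=> s /andP [walk_s /eqP <-].
by have := hdist_path_le walk_s; rewrite size_tuple.
Qed.

Lemma walkb_hdist u v : walkb (@hadj d q) (hdist u v) u v.
Proof.
move Dn : (hdist u v) => n; elim: n u Dn => [|n IHn] u Dn.
  by apply/existsP; exists [tuple]; move/eqP: Dn; rewrite hdist0 /= eq_sym.
have /set0Pn [c] : [set i | u i != v i] != set0 by rewrite -card_gt0 -/(hdist u v) Dn.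
rewrite inE => ucv.
pose u' := [ffun i => if i == c then v c else u i].
have u'_diff : [set i | u i != u' i] = [set c].
  by apply/setP => i; rewrite !inE ffunE; case: (i =P c) => [->|]; rewrite ?eqxx.
have /IHn /existsP [s /andP [walk_s last_s]] : hdist u' v = n.
  apply/eqP; rewrite -eqSS -Dn /hdist (cardsD1 c [set i | u i != v i]) inE ucv add1n eqSS.
  apply/eqP/eq_card => i; rewrite !inE ffunE.
  by case: (i =P c) => [->|]; rewrite ?eqxx.
apply/existsP; exists (cons_tuple u' s); rewrite /= walk_s last_s andbT.
by rewrite /hadj u'_diff cards1.
Qed.

Lemma gdist_hadj u v : (1 < q)%N -> gdist (@hadj d q) u v = hdist u v.
Proof.
move=> q_gt1; apply: gdist_shortest; last 2 first.
- exact: walkb_hdist.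
- by move=> m; apply: walkb_hdist_le.
rewrite card_ffun !card_ord; apply: leq_ltn_trans (ltn_expl d q_gt1).
by apply: leq_trans (max_card _) _; rewrite card_ord.
Qed.

End HammingDistance.

Section HammingScheme.
Variables (R : fieldType) (d q : nat).
Hypothesis q_neq0 : q%:R != 0 :> R.
Implicit Types (S : {set 'I_d}) (u v w : hvertex d q).

Let q_gt0 : (0 < q)%N.
Proof. by rewrite lt0n; apply: contraNneq q_neq0 => ->. Qed.

Definition proj_const (a b : 'I_q) : R := q%:R^-1.
Definition proj_mean0 (a b : 'I_q) : R := (a == b)%:R - q%:R^-1.

Lemma sum_proj_const b : \sum_x proj_const x b = 1.
Proof. by rewrite sumr_const card_ord -(mulr_natr q%:R^-1) mulVf. Qed.

Lemma sum_proj_mean0 b : \sum_x proj_mean0 x b = 0.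
Proof.
rewrite /proj_mean0 sumrB (sum_proj_const b) (bigD1 b) //= eqxx big1 ?addr0 ?subrr // => x.
by move/negbTE->.
Qed.

Definition ham_idem S : hvertex d q -> hvertex d q -> R :=
  prod_kernel (fun c => if c \in S then proj_mean0 else proj_const).

Lemma sum_ham_idem u v : \sum_(S : {set 'I_d}) ham_idem S u v = (u == v)%:R.
Proof.
have -> : (u == v) = [forall c, u c == v c].
  by apply/eqP/forallP => [-> // | uv]; apply/ffunP => c; apply/eqP.
rewrite -prodr_nat_bool.
under [RHS]eq_bigr => c _ do rewrite -[_%:R](subrK q%:R^-1).
rewrite bigA_distr; apply: eq_bigr => S _; apply: eq_bigr => c _.
by case: (c \in S).
Qed.

Lemma hadj_prod_kernel u v :
  (hadj u v)%:R =
  \sum_c prod_kernel (fun c' a b => (if c' == c then a != b else a == b)%:R) u v :> R.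
Proof.
rewrite /prod_kernel /hadj; set D := [set i | u i != v i].
have prod_D c : \prod_c' (if c' == c then u c' != v c' else u c' == v c')%:R = (D == [set c])%:R :> R.
  rewrite prodr_nat_bool; congr (nat_of_bool _ )%:R; apply/forallP/eqP => [Dc | Dc c'].
    by apply/setP => c'; move: (Dc c'); rewrite !inE; case: (c' == c) => ->.
  by move/setP/(_ c'): Dc; rewrite !inE; case: (c' == c) => [->|/negbFE].
under eq_bigr do rewrite prod_D.
have [/cards1P [c ->] | D_not1] := boolP (#|D| == 1%N).
  rewrite (bigD1 c) //= eqxx big1 ?addr0 // => c' c'c.
  by rewrite (inj_eq set1_inj) eq_sym (negbTE c'c).
by rewrite big1 // => c _; case: eqP => // Dc; rewrite Dc cards1 in D_not1.
Qed.

Definition adj_eigval (n : nat) : R := (d * (q - 1))%:R - (q * n)%:R.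

Lemma sum_hadj_ham_idem S u v :
  \sum_w (hadj u w)%:R * ham_idem S w v = adj_eigval #|S| * ham_idem S u v.
Proof.
pose mu c : R := if c \in S then -1 else q%:R - 1.
have coord c : prod_kernel (fun c' a b => \sum_x
      (if c' == c then a != x else a == x)%:R * (if c' \in S then proj_mean0 else proj_const) x b) u v
    = mu c * ham_idem S u v.
  rewrite /prod_kernel /ham_idem (bigD1 c) //= [X in _ = _ * X](bigD1 c) //= mulrA.
  congr (_ * _).
    rewrite eqxx sum_neq_mulr /mu; case: (c \in S).
      by rewrite sum_proj_mean0 sub0r mulN1r.
    by rewrite sum_proj_const /proj_const mulrBl mul1r divff.
  by apply: eq_bigr => c' /negbTE ->; rewrite sum_eq_mulr.
under eq_bigr do rewrite hadj_prod_kernel mulr_suml.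
rewrite exchange_big /=; under eq_bigr do rewrite prod_kernel_conv coord.
rewrite -mulr_suml /adj_eigval; congr (_ * _).
rewrite (eq_bigr (fun c => (q%:R - 1) - q%:R * (c \in S)%:R)) => [|c _]; last first.
  by rewrite /mu; case: (c \in S); rewrite /= ?mulr1 ?mulr0 ?subr0 //; ring.
rewrite sumrB sumr_const card_ord -mulr_sumr -natr_card_set !natrM natrB //.
by rewrite mulr_natl.
Qed.

Lemma ham_idem0 u v : ham_idem set0 u v = q%:R^-1 ^+ d.
Proof.
rewrite /ham_idem /prod_kernel -[d in RHS]card_ord -prodr_const.
by apply: eq_bigr => c _; rewrite inE.
Qed.

Lemma ham_idem1 c u v : ham_idem [set c] u v = proj_mean0 (u c) (v c) * q%:R^-1 ^+ d.-1.
Proof.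
rewrite /ham_idem /prod_kernel (bigD1 c) //= inE eqxx; congr (_ * _).
have -> : d.-1 = #|predC1 c| by rewrite cardC1 card_ord.
rewrite -prodr_const.
by apply: eq_bigr => c' /negbTE c'c; rewrite inE c'c.
Qed.

Definition dist_eigval (n : nat) : R :=
  q%:R ^+ d.-1 * (if n == 0%N then (d * (q - 1))%:R else if n == 1%N then -1 else 0).

Lemma hdist_ham_idem u v : (0 < d)%N ->
  (hdist u v)%:R = \sum_(S : {set 'I_d}) dist_eigval #|S| * ham_idem S u v.
Proof.
move=> d_gt0.
rewrite sum_card_le1 => [|S]; last by case: #|S| => [|[|n]] //; rewrite /dist_eigval !mulr0 mul0r.
have qd_neq0 : q%:R ^+ d.-1 != 0 :> R by rewrite expf_neq0.
have coord c : (c \in [set i | u i != v i])%:R =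
    q%:R ^+ d.-1 * (q%:R - 1) * q%:R^-1 ^+ d +
    q%:R ^+ d.-1 * -1 * (proj_mean0 (u c) (v c) * q%:R^-1 ^+ d.-1) :> R.
  rewrite inE /proj_mean0 -[in q%:R^-1 ^+ d](prednK d_gt0) exprS !exprVn.
  move: qd_neq0; set x := q%:R ^+ d.-1 => x_neq0.
  by case: (u c == v c) => /=; field; apply/andP.
rewrite cards0 ham_idem0 /hdist natr_card_set.
under eq_bigr do rewrite coord.
under [in RHS]eq_bigr do rewrite cards1 ham_idem1.
rewrite big_split /= -!mulr_sumr sumr_const card_ord /dist_eigval /= natrM natrB //.
ring.
Qed.

Lemma sum_ham_idem_mx : \sum_(S : {set 'I_d}) kernel_mx (ham_idem S) = 1%:M.
Proof.
by rewrite -kernel_mx_sum -kernel_mx1; apply: eq_kernel_mx => u v; apply: sum_ham_idem.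
Qed.

Lemma adj_mx_ham_idem S :
  adj_mx R (@hadj d q) *m kernel_mx (ham_idem S) = adj_eigval #|S| *: kernel_mx (ham_idem S).
Proof.
rewrite -[adj_mx _ _]/(kernel_mx (fun u v => (hadj u v)%:R)) kernel_mxM -kernel_mx_scale.
by apply: eq_kernel_mx => u v; apply: sum_hadj_ham_idem.
Qed.

End HammingScheme.

Lemma hpoly_adj_eigval (R : numFieldType) (d q n : nat) :
  (0 < d)%N -> (1 < q)%N -> (n <= d)%N ->
  (hpoly R d q).[adj_eigval R d q n] = dist_eigval R d q n.
Proof.
move=> d_gt0 q_gt1 n_le_d.
have q_neq0 : q%:R != 0 :> R by rewrite pnatr_eq0 -lt0n ltnW.
have lin_at i : ('X - ((hb d q 0)%:R)%:P + ((q * hc i)%N%:R)%:P).[adj_eigval R d q n]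
    = q%:R * (i%:R - n%:R) :> R.
  by rewrite !hornerE /adj_eigval /hb /hc subn0 !natrM; ring.
have cancel_q (x y : R) : q%:R * y * (q%:R * x)^-1 = y / x.
  by rewrite invfM mulrACA divff // mul1r.
rewrite /hpoly hornerM hornerC hornerD hornerN hornerM hornerC !horner_prod.
under eq_bigr do rewrite hornerM hornerC lin_at /hc natrM cancel_q.
under [X in _ - _ * X]eq_bigr do rewrite hornerM hornerC lin_at /hc cancel_q.
rewrite /dist_eigval; clear lin_at; case: n n_le_d => [|[|n]] n_le_d /=.
- rewrite [X in _ - _ * X](@prod_index_iota_eq0 _ _ _ 0%N) ?subrr ?mul0r // mulr0 subr0.
  rewrite big1_seq => [|i /andP [_]]; last first.
    by rewrite mem_index_iota subr0 => /andP [i_gt0 _]; rewrite divff // pnatr_eq0 -lt0n.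
  by rewrite mulr1 !natrM natrX; ring.
- rewrite [X in _ * (X - _)](@prod_index_iota_eq0 _ _ _ 1%N) ?subrr ?mul0r ?ltnS // sub0r.
  rewrite big1_seq => [|i /andP [i_neq1 _]]; last first.
    by rewrite divff // subr_eq0 pnatr_eq1.
  have dq_neq0 : (d * (q - 1))%:R != 0 :> R.
    by rewrite pnatr_eq0 muln_eq0 negb_or -!lt0n d_gt0 subn_gt0.
  by rewrite mulr1 mulrN mulnAC natrM mulrAC divff // mul1r natrX mulrN1.
- rewrite [X in _ * (X - _)](@prod_index_iota_eq0 _ _ _ n.+2) ?subrr ?mul0r ?ltnS //.
  by rewrite (@prod_index_iota_eq0 _ _ _ n.+2) ?subrr ?mul0r ?ltnS // mulr0 subrr !mulr0.
Qed.

Theorem theorem3p2 (R : numFieldType) (d q : nat) (hd : (1 <= d)%N) (hq : (2 <= q)%N) :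
  dist_mx R (@hadj d q) = mx_eval (hpoly R d q) (adj_mx R (@hadj d q)).
Proof.
have q_neq0 : q%:R != 0 :> R by rewrite pnatr_eq0 -lt0n ltnW.
rewrite (mx_eval_spectral _ (sum_ham_idem_mx R d q) (adj_mx_ham_idem q_neq0)).
transitivity (kernel_mx (fun u v : hvertex d q =>
  \sum_(S : {set 'I_d}) dist_eigval R d q #|S| * ham_idem R S u v)).
  rewrite -[dist_mx _ _]/(kernel_mx (fun u v => (gdist (@hadj d q) u v)%:R)).
  by apply: eq_kernel_mx => u v; rewrite gdist_hadj // hdist_ham_idem.
rewrite kernel_mx_sum; apply: eq_bigr => S _.
by rewrite kernel_mx_scale hpoly_adj_eigval // (leq_trans (max_card _)) ?card_ord.
Qed.
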